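(* A collection $(p^{(n)}_k)^{n\geq1}_{k\leq n}$ where $p^{(n)}_k$ is a non-negative, symmetric function on $\{(n_1,\dots,n_k):\,\sum_{j=1}^k n_j=n\}$, is an EPerPF if and only if it satisfies $$p^{(1)}(1)=1,\qquad p^{(n)}_{k(\pi)}(\mathrm{c}(\pi))=\sum_{\sigma\in\mathcal{A}(\pi)}p_{k(\sigma)}^{(n+1)}(\mathrm{c}(\sigma))\quad\text{for any }\pi\in\mathcal S_n.$$
   Context: $\mathcal S_n$ is the symmetric group on $[n]$. For $\pi\in\mathcal S_n$, $k(\pi)$ is its number of cycles and $\mathrm{c}(\pi)=(c_1(\pi),\dots,c_{k(\pi)}(\pi))$ its vector of cycle lengths (cycles written starting from their least element and ordered by first elements). The deletion map $\operatorname{del}:\mathcal S_{n+1}\to\mathcal S_n$ is $\operatorname{del}(\sigma)(i)=\sigma(i)$ if $i\neq\sigma^{-1}(n+1)$ and $\operatorname{del}(\sigma)(i)=\sigma(n+1)$ if $i=\sigma^{-1}(n+1)$ (it deletes $n+1$ from the cycle representation), and $\mathcal A(\pi)=\{\sigma\in\mathcal S_{n+1}:\operatorname{del}(\sigma)=\pi\}$ (so $|\mathcal A(\pi)|=n+1$). A random permutation is finitely exchangeable if permutations with equal cycle type have equal probability; it is exchangeable if its law is the $n$-th element of a sequence of laws of finitely exchangeable random permutations $\boldsymbol\pi_m\in\mathcal S_m$ that is consistent in the sense $\operatorname{del}(\boldsymbol\pi_{m+1})\overset{d}{=}\boldsymbol\pi_m$. Such laws are exactly those with pmf $p(\pi)=\varphi^{(n)}_k(n_1,\dots,n_k)/\prod_{j=1}^k(n_j-1)!$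 for an EPPF $(\varphi^{(n)})$ and cycle lengths $(n_1,\dots,n_k)$ of $\pi$. An EPerPF (exchangeable permutation probability function) is the sequence $(p^{(n)})_{n\geq1}$ of functions of this form determining such a consistent sequence of laws of exchangeable random permutations. *)

From HB Require Import structures.
From mathcomp Require Import all_boot all_order all_algebra all_fingroup.
From mathcomp Require Import all_reals.
Set Implicit Arguments. Unset Strict Implicit. Unset Printing Implicit Defensive.
Import Order.TTheory GRing.Theory Num.Theory.

(* Convention: the ground set [n] = {1,...,n} is represented by 'I_n = {0,...,n-1}
   (i.e. i <-> i+1); so the new element n+1 of [n+1] is ord_max : 'I_n.+1. *)

(* c(pi): the cycle lengths, listed in the order of the least elements of the
   cycles (enum 'I_n is increasing; x is selected iff it is the least element of
   its cycle). k(pi) = size (cyc pi). *)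
Definition cyc (n : nat) (s : 'S_n) : seq nat :=
  [seq #|porbit s x| | x <- enum 'I_n & [forall y in porbit s x, (x <= y)%N]].

Definition ncycles (n : nat) (s : 'S_n) : nat := size (cyc s).

(* The deletion map del : S_{n+1} -> S_n, as a function 'I_n -> 'I_n:
   del(sigma)(i) = sigma(i) if sigma(i) <> n+1, and sigma(n+1) otherwise. *)
Definition del_fun (n : nat) (s : 'S_n.+1) (i : 'I_n) : 'I_n :=
  let j := s (widen_ord (leqnSn n) i) in
  let j' := if val j == n then s ord_max else j in
  insubd i (val j').

Definition inA (n : nat) (pi : 'S_n) (s : 'S_n.+1) : bool :=
  [forall i : 'I_n, del_fun s i == pi i].

(* p n s stands for p^{(n)}_{size s}(s). *)
Definition law (R : realType) (p : nat -> seq nat -> R) (n : nat) (pi : 'S_n) : R :=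
  p n (cyc pi).

Definition is_EPerPF (R : realType) (p : nat -> seq nat -> R) : Prop :=
  (forall n : nat, (0 < n)%N ->
     [/\ (forall pi : 'S_n, (0 <= law p pi)%R),
         (\sum_(pi : 'S_n) law p pi = 1)%R
       & (forall pi pi' : 'S_n, perm_eq (cyc pi) (cyc pi') -> law p pi = law p pi')])
  /\
  (forall n : nat, (0 < n)%N -> forall pi : 'S_n,
     law p pi = (\sum_(s : 'S_n.+1 | inA pi s) law p s)%R).

(* For a nonnegative symmetric p, nonnegativity and finite exchangeability of
   the induced laws are automatic, because c(pi) is a composition of n into
   positive parts.  Since del partitions S_{n+1} into the fibres A(pi), the
   consistency equations make the total mass of the law on S_n independent of
   n, so normalisation of every law reduces to p^{(1)}(1) = 1. *)
From HB Require Import structures.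
From mathcomp Require Import all_boot all_order all_algebra all_fingroup.
From mathcomp Require Import all_reals.
From mathcomp Require Import zify.
Import Order.TTheory GRing.Theory Num.Theory.

Set Implicit Arguments. Unset Strict Implicit.

Section Deletion.

Variables (n : nat) (s : 'S_n.+1).

Let widen (i : 'I_n) : 'I_n.+1 := widen_ord (leqnSn n) i.

Lemma perm_max_neq_widen (i : 'I_n) : s ord_max != s (widen i).
Proof. by rewrite (inj_eq perm_inj) eqE /= neq_ltn ltn_ord orbT. Qed.

Definition del_lift (i : 'I_n) : 'I_n.+1 :=
  if val (s (widen i)) == n then s ord_max else s (widen i).

Lemma del_lift_lt (i : 'I_n) : (val (del_lift i) < n)%N.
Proof.
have lt_n (j : 'I_n.+1) : val j != n -> (val j < n)%N.
  by move=> j_n; rewrite ltn_neqAle j_n -ltnS ltn_ord.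
rewrite /del_lift; case: ifP => [/eqP si_n | /negbT]; last exact: lt_n.
apply: lt_n; apply: contra (perm_max_neq_widen i) => /eqP smax_n.
by rewrite -val_eqE smax_n si_n.
Qed.

Lemma val_del_fun (i : 'I_n) : val (del_fun s i) = val (del_lift i).
Proof. by rewrite /del_fun insubdK //; exact: del_lift_lt. Qed.

Lemma del_fun_inj : injective (del_fun s).
Proof.
move=> i j /(congr1 val); rewrite !val_del_fun /del_lift => /val_inj.
have widen_inj : injective widen by move=> a b /(congr1 val) /= /val_inj.
have max_neq (k : 'I_n) : s ord_max <> s (widen k) by apply/eqP/perm_max_neq_widen.
case: ifP => [/eqP si_n | _]; case: ifP => [/eqP sj_n | _] //.
- by move=> _; apply/widen_inj/(@perm_inj _ s)/val_inj; rewrite si_n sj_n.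
- by move/max_neq.
- by move/esym/max_neq.
- by move/perm_inj/widen_inj.
Qed.

Definition del_perm : 'S_n := perm del_fun_inj.

Lemma inA_del (pi : 'S_n) : inA pi s = (del_perm == pi).
Proof.
apply/forallP/eqP => [del_pi | <- i]; last by rewrite permE.
by apply/permP => i; rewrite permE; apply/eqP.
Qed.

End Deletion.

Lemma sum_del_fibres (V : nmodType) n (F : 'S_n.+1 -> V) :
  (\sum_(s : 'S_n.+1) F s = \sum_(pi : 'S_n) \sum_(s | inA pi s) F s)%R.
Proof.
rewrite (partition_big (@del_perm n) predT) //=.
by apply: eq_bigr => pi _; apply: eq_bigl => s; rewrite inA_del.
Qed.

Lemma consistent_mass_const (V : nmodType) (f : forall n, 'S_n -> V) :
    (forall n, (0 < n)%N -> forall pi : 'S_n,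
       f n pi = \sum_(s : 'S_n.+1 | inA pi s) f n.+1 s)%R ->
  forall n, (\sum_(pi : 'S_n.+1) f n.+1 pi = \sum_(pi : 'S_1) f 1%N pi)%R.
Proof.
move=> f_cons; elim=> [// | n IHn].
by rewrite sum_del_fibres -IHn; apply: eq_bigr => pi _; rewrite f_cons.
Qed.

Section CycleMinima.

Variables (n : nat) (s : 'S_n).

Definition is_cycle_min (x : 'I_n) : bool := [forall y in porbit s x, (x <= y)%N].

Lemma cycE : cyc s = [seq #|porbit s x| | x <- enum 'I_n & is_cycle_min x].
Proof. by []. Qed.

Lemma porbit_eq (x y : 'I_n) : y \in porbit s x -> porbit s y = porbit s x.
Proof. by rewrite -eq_porbit_mem => /eqP. Qed.

Lemma cycle_min_uniq (x x' : 'I_n) :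
  is_cycle_min x -> is_cycle_min x' -> porbit s x = porbit s x' -> x = x'.
Proof.
move=> /forall_inP x_min /forall_inP x'_min orb_xx'.
have x'x : x' \in porbit s x by rewrite orb_xx' porbit_id.
have xx' : x \in porbit s x' by rewrite -orb_xx' porbit_id.
by apply/val_inj/eqP; rewrite eqn_leq x_min // x'_min.
Qed.

Lemma exists_cycle_min (y : 'I_n) : exists2 x, is_cycle_min x & y \in porbit s x.
Proof.
case: (arg_minnP val (porbit_id s y)) => x xy x_min.
exists x; last by rewrite porbit_sym.
by apply/forall_inP => z; rewrite (porbit_eq xy); exact: x_min.
Qed.

Lemma cyc_pos : all (fun m => 0 < m)%N (cyc s).
Proof.
by apply/allP => m; rewrite cycE => /mapP [x _ ->]; rewrite lt0n card_porbit_neq0.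
Qed.

Lemma cyc_sum : sumn (cyc s) = n.
Proof.
rewrite cycE sumnE big_map big_filter enumT.
under eq_bigr do rewrite -sum1_card.
rewrite (exchange_big_dep predT) //= -[RHS]card_ord -sum1_card.
apply: eq_bigr => y _; rewrite sum1dep_card.
have [x0 x0_min yx0] := exists_cycle_min y.
apply: (@eq_card1 _ x0) => x; rewrite inE.
apply/andP/eqP => [[x_min yx] | ->] //.
by apply: cycle_min_uniq; rewrite // -(porbit_eq yx) (porbit_eq yx0).
Qed.

End CycleMinima.

Lemma cyc_S1 (pi : 'S_1) : cyc pi = [:: 1%N].
Proof.
have := cyc_sum pi; have := cyc_pos pi.
case: (cyc pi) => [|a [|b t]] //=; first by rewrite addn0 => _ ->.
by move=> /and3P [a_gt0 b_gt0 _]; lia.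
Qed.

Lemma sum_S1_cyc (V : nmodType) (F : seq nat -> V) :
  (\sum_(pi : 'S_1) F (cyc pi) = F [:: 1%N])%R.
Proof. by under eq_bigr do rewrite cyc_S1; rewrite sumr_const card_Sn. Qed.

Theorem theorem2 (R : realType) (p : nat -> seq nat -> R)
  (p_nonneg : forall (n : nat) (s : seq nat),
      (0 < n)%N -> all (fun m => 0 < m)%N s -> sumn s = n -> (0 <= p n s)%R)
  (p_sym : forall (n : nat) (s t : seq nat),
      (0 < n)%N -> all (fun m => 0 < m)%N s -> sumn s = n ->
      perm_eq s t -> p n s = p n t) :
  is_EPerPF p <->
  (p 1%N [:: 1%N] = 1%R /\
   forall (n : nat), (0 < n)%N -> forall pi : 'S_n,
     p n (cyc pi) = (\sum_(s : 'S_n.+1 | inA pi s) p n.+1 (cyc s))%R).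
Proof.
split=> [[laws consistent] | [p1 consistent]]; split=> //.
  by have [_ <- _] := laws 1%N isT; rewrite /law sum_S1_cyc.
case=> // n _; split.
- by move=> pi; apply: p_nonneg; [|exact: cyc_pos|exact: cyc_sum].
- by rewrite /law (consistent_mass_const consistent) sum_S1_cyc.
- by move=> pi pi' same_type; apply: p_sym; [|exact: cyc_pos|exact: cyc_sum|].
Qed.
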